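(* Let $n\ge 3$. The center of $U_n$ is $$Z(U_n)=\{(x_1+f(x_2,\dots,x_n),\,x_2,\dots,x_n)\mid f\in K\langle x_2,\dots,x_n\rangle,\ f(x_2+g_2,\dots,x_n+g_n)=f(x_2,\dots,x_n)\text{ for all } g_i\in K\langle x_{i+1},\dots,x_n\rangle\ (2\le i\le n-1),\ g_n\in K\}.$$
   Context: $K$ is a field of characteristic zero and $A_n=K\langle x_1,\dots,x_n\rangle$ is the free associative $K$-algebra with unity. $U_n$ is the group of unitriangular automorphisms of $A_n$: all $K$-automorphisms $(x_1+f_1,\dots,x_n+f_n)$, meaning $x_i\mapsto x_i+f_i$, with $f_i\in K\langle x_{i+1},\dots,x_n\rangle$ for $i<n$ and $f_n\in K$. *)

(* Noncommutative polynomials K<x_0,...,x_{n-1}> represented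
   as formal (unnormalized) finite sums of monomials (coefficient, word);
   two representations denote the same element iff their coefficient
   functions agree ([peq]). Variables are 0-indexed: x_{i+1} of the paper is
   index i here. *)
From HB Require Import structures.
From mathcomp Require Import all_boot all_order all_algebra.
Set Implicit Arguments. Unset Strict Implicit. Unset Printing Implicit Defensive.
Import GRing.Theory.
Local Open Scope ring_scope.

Section NC.
Variables (K : fieldType) (n : nat).

Definition ncpoly := seq (K * seq 'I_n).

Definition coef (p : ncpoly) (w : seq 'I_n) : K :=
  \sum_(t <- p | t.2 == w) t.1.

Definition peq (p q : ncpoly) : Prop := forall w, coef p w = coef q w.

Definition pX (i : 'I_n) : ncpoly := [:: (1, [:: i])].
Definition pC (c : K) : ncpoly := [:: (c, [::])].
Definition padd (p q : ncpoly) : ncpoly := p ++ q.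
Definition pscale (c : K) (p : ncpoly) : ncpoly := [seq (c * t.1, t.2) | t <- p].
Definition psub (p q : ncpoly) : ncpoly := p ++ pscale (-1) q.
Definition pmul (p q : ncpoly) : ncpoly :=
  [seq (a.1 * b.1, a.2 ++ b.2) | a <- p, b <- q].
Definition pprod (ps : seq ncpoly) : ncpoly := foldr pmul (pC 1) ps.

Definition subst (phi : 'I_n -> ncpoly) (p : ncpoly) : ncpoly :=
  flatten [seq pscale t.1 (pprod (map phi t.2)) | t <- p].

Definition in_sub (i : nat) (p : ncpoly) : Prop :=
  forall w, coef p w != 0 -> all (fun j : 'I_n => (i < j)%N) w.

(* an endomorphism given by the images of the generators is unitriangular:
   phi i = x_i + f_i with f_i in K<x_{i+1},...> (for the last index this
   forces f_i in K) *)
Definition inU (phi : 'I_n -> ncpoly) : Prop :=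
  forall i : 'I_n, in_sub i (psub (phi i) (pX i)).

Definition comp (phi psi : 'I_n -> ncpoly) : 'I_n -> ncpoly :=
  fun i => subst phi (psi i).

Definition aut_eq (phi psi : 'I_n -> ncpoly) : Prop :=
  forall i, peq (phi i) (psi i).

Definition in_center (phi : 'I_n -> ncpoly) : Prop :=
  inU phi /\ forall psi, inU psi -> aut_eq (comp phi psi) (comp psi phi).

End NC.

From Pilot Require Import Defs.
From HB Require Import structures.
From mathcomp Require Import all_boot all_order all_algebra.
From mathcomp Require Import ring.
Set Implicit Arguments. Unset Strict Implicit. Unset Printing Implicit Defensive.
Import GRing.Theory.
Local Open Scope ring_scope.

(* A central phi commutes with the elementary automorphisms x_(i-1) |-> x_(i-1) + x_i;
   since phi(x_(i-1)) - x_(i-1) only involves variables after x_(i-1), which these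
   fix, this forces phi(x_i) = x_i for every variable but the first. So phi is
   x_0 |-> x_0 + f with f free of x_0, and commuting with a psi in U_n fixing x_0
   says exactly psi(f) = f. Conversely, for such a phi both phi(psi(x_i)) and
   psi(phi(x_i)) reduce to psi(x_i) plus (for i = 0) f, because psi(x_i) - x_i only
   involves variables fixed by phi. *)

Section FreeAlgebra.
Variables (K : fieldType) (n : nat).
Local Notation P := (ncpoly K n).
Local Notation X := (@pX K n).
Local Notation word := (seq 'I_n).
Local Notation delta u w := (if u == w then (1 : K) else 0).

Lemma coef_padd (p q : P) w : coef (padd p q) w = coef p w + coef q w.
Proof. by rewrite /coef big_cat. Qed.

Lemma coef_pscale c (p : P) w : coef (pscale c p) w = c * coef p w.
Proof. by rewrite /coef big_map mulr_sumr. Qed.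

Lemma coef_psub (p q : P) w : coef (psub p q) w = coef p w - coef q w.
Proof. by rewrite coef_padd coef_pscale mulN1r. Qed.

Lemma coef_cons (t : K * word) (p : P) w :
  coef (t :: p) w = (if t.2 == w then t.1 else 0) + coef p w.
Proof. by rewrite /coef big_cons; case: ifP => //; rewrite add0r. Qed.

Lemma coef_monomial c (u : word) w : coef [:: (c, u)] w = c * delta u w.
Proof.
by rewrite coef_cons /coef big_nil addr0; case: ifP; rewrite ?mulr1 ?mulr0.
Qed.

Lemma coef_pX (j : 'I_n) w : coef (X j) w = delta [:: j] w.
Proof. by rewrite coef_monomial mul1r. Qed.

Lemma peq_padd_psub (p q : P) : peq (padd q (psub p q)) p.
Proof. by move=> w; rewrite coef_padd coef_psub addrC subrK. Qed.

Definition pdot (p : P) (F : word -> K) : K := \sum_(t <- p) t.1 * F t.2.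

Lemma pdot_cons t (p : P) F : pdot (t :: p) F = t.1 * F t.2 + pdot p F.
Proof. by rewrite /pdot big_cons. Qed.

Lemma pdot_delta (p : P) w : pdot p (fun u => delta u w) = coef p w.
Proof.
rewrite /pdot /coef [RHS]big_mkcond; apply: eq_bigr => t _.
by case: ifP; rewrite ?mulr1 ?mulr0.
Qed.

Lemma pdot_coef (p : P) F (s : seq word) :
  uniq s -> {subset [seq t.2 | t <- p] <= s} ->
  pdot p F = \sum_(u <- s) coef p u * F u.
Proof.
move=> s_uniq; elim: p => [|t p IHp] p_s.
  by rewrite /pdot big_nil big1 // => u _; rewrite /coef big_nil mul0r.
rewrite pdot_cons IHp; last by move=> u u_p; apply: p_s; rewrite inE u_p orbT.
under [RHS]eq_bigr => u _ do rewrite coef_cons mulrDl.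
rewrite big_split /=; congr (_ + _).
rewrite (bigD1_seq t.2) //=; last by apply: p_s; rewrite inE eqxx.
by rewrite eqxx big1 ?addr0 // => u /negPf; rewrite eq_sym => ->; rewrite mul0r.
Qed.

Lemma pdot_peq (p q : P) F : peq p q -> pdot p F = pdot q F.
Proof.
move=> pq; pose s := undup [seq t.2 | t <- p ++ q].
have s_uniq : uniq s by exact: undup_uniq.
rewrite !(pdot_coef F s_uniq) => [|u u_q|u u_p];
  rewrite ?mem_undup ?map_cat ?mem_cat ?u_p ?u_q ?orbT //.
by apply: eq_bigr => u _; rewrite pq.
Qed.

Lemma eq_pdot (p : P) F G :
  (forall u, coef p u != 0 -> F u = G u) -> pdot p F = pdot p G.
Proof.
move=> FG; pose s := undup [seq t.2 | t <- p].
have p_s : {subset [seq t.2 | t <- p] <= s} by move=> u; rewrite mem_undup.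
rewrite !(pdot_coef _ (undup_uniq _) p_s); apply: eq_bigr => u _.
by case: (eqVneq (coef p u) 0) => [->|/FG ->]; rewrite ?mul0r.
Qed.

Lemma coef_pmul (p q : P) w :
  coef (pmul p q) w = pdot p (fun u => pdot q (fun v => delta (u ++ v) w)).
Proof.
elim: p => [|a p IHp]; first by rewrite /coef /pdot !big_nil.
rewrite /pmul allpairs_cons -/(pmul p q) coef_padd IHp pdot_cons; congr (_ + _).
rewrite /coef /pdot big_map big_mkcond mulr_sumr; apply: eq_bigr => b _ /=.
by case: ifP; rewrite ?mulr1 ?mulr0 // mulrC.
Qed.

Lemma pmul_peq (p p' q q' : P) : peq p p' -> peq q q' -> peq (pmul p q) (pmul p' q').
Proof.
move=> pp' qq' w; rewrite !coef_pmul (pdot_peq _ pp'); apply: eq_pdot => u _.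
exact: pdot_peq.
Qed.

Lemma pmul_pC1 (p : P) : pmul p (@pC K n 1) = p.
Proof.
by elim: p => [|[c u] p IHp] //; rewrite /pmul allpairs_cons -/(pmul p _) IHp /= mulr1 cats0.
Qed.

Lemma pprod_map_peq (phi psi : 'I_n -> P) (u : word) :
  (forall j, j \in u -> peq (phi j) (psi j)) ->
  peq (pprod (map phi u)) (pprod (map psi u)).
Proof.
elim: u => [|j u IHu] phi_psi //=.
apply: pmul_peq; first by apply: phi_psi; rewrite inE eqxx.
by apply: IHu => i i_u; apply: phi_psi; rewrite inE i_u orbT.
Qed.

Lemma pprod_map_pX (u : word) : pprod (map X u) = [:: (1, u)].
Proof. by elim: u => [|j u IHu] //=; rewrite IHu /pmul /= mulr1. Qed.

Lemma coef_subst (phi : 'I_n -> P) (p : P) w :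
  coef (subst phi p) w = pdot p (fun u => coef (pprod (map phi u)) w).
Proof.
elim: p => [|t p IHp]; first by rewrite /coef /pdot !big_nil.
by rewrite /subst /= coef_padd -/(subst phi p) IHp coef_pscale pdot_cons.
Qed.

Lemma subst_padd (phi : 'I_n -> P) (p q : P) :
  subst phi (padd p q) = padd (subst phi p) (subst phi q).
Proof. by rewrite /subst /padd map_cat flatten_cat. Qed.

Lemma subst_pX (phi : 'I_n -> P) j : peq (subst phi (X j)) (phi j).
Proof. by move=> w; rewrite /subst /= pmul_pC1 cats0 coef_pscale mul1r. Qed.

Lemma subst_peq (phi : 'I_n -> P) (p q : P) : peq p q -> peq (subst phi p) (subst phi q).
Proof. by move=> pq w; rewrite !coef_subst; apply: pdot_peq. Qed.

Lemma subst_id (p : P) : peq (subst X p) p.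
Proof.
move=> w; rewrite coef_subst -pdot_delta; apply: eq_pdot => u _.
by rewrite pprod_map_pX coef_monomial mul1r.
Qed.

Lemma eq_subst_in_sub (phi psi : 'I_n -> P) (k : nat) (p : P) :
  in_sub k p -> (forall j : 'I_n, (k < j)%N -> peq (phi j) (psi j)) ->
  peq (subst phi p) (subst psi p).
Proof.
move=> p_k phi_psi w; rewrite !coef_subst; apply: eq_pdot => u u_p.
apply: pprod_map_peq => j j_u; apply: phi_psi.
exact: (allP (p_k u u_p)).
Qed.

Lemma subst_in_sub (phi : 'I_n -> P) (k : nat) (p : P) :
  in_sub k p -> (forall j : 'I_n, (k < j)%N -> peq (phi j) (X j)) ->
  peq (subst phi p) p.
Proof. by move=> p_k phi_fix w; rewrite (eq_subst_in_sub p_k phi_fix) subst_id. Qed.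

End FreeAlgebra.

Section Unitriangular.
Variables (K : fieldType) (n : nat).
Local Notation P := (ncpoly K n).
Local Notation X := (@pX K n).

Lemma subst_inU (phi psi : 'I_n -> P) (k : 'I_n) :
  inU psi -> (forall j : 'I_n, (k < j)%N -> peq (phi j) (X j)) ->
  peq (subst phi (psi k)) (padd (phi k) (psub (psi k) (X k))).
Proof.
move=> psiU phi_fix w.
rewrite -(subst_peq _ (peq_padd_psub (psi k) (X k))) subst_padd coef_padd.
by rewrite subst_pX (subst_in_sub (psiU k) phi_fix) coef_padd.
Qed.

Definition elementary (k i : 'I_n) : 'I_n -> P :=
  fun j => if j == k then padd (X k) (X i) else X j.

Lemma inU_elementary (k i : 'I_n) : (k < i)%N -> inU (elementary k i).
Proof.
move=> k_i j w; rewrite coef_psub /elementary.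
case: (eqVneq j k) => [->|_]; last by rewrite subrr eqxx.
rewrite coef_padd addrAC subrr add0r coef_pX.
by case: ([:: i] =P w) => [<- _|_]; rewrite ?eqxx //= k_i.
Qed.

Lemma inU_translate_tail (g : 'I_n -> P) :
  (forall i : 'I_n, (0 < i)%N -> in_sub i (g i)) ->
  inU (fun i => if (i : nat) == 0%N then X i else padd (X i) (g i)).
Proof.
move=> g_sub i w; rewrite coef_psub; case: ifP => i_0; first by rewrite subrr eqxx.
by rewrite coef_padd addrAC subrr add0r; apply: g_sub; rewrite lt0n i_0.
Qed.

Lemma center_fixes_tail (phi : 'I_n -> P) :
  in_center phi -> forall i : 'I_n, (0 < i)%N -> peq (phi i) (X i).
Proof.
move=> [phiU phi_comm] i i_gt0.
have k_lt_n : (i.-1 < n)%N by apply: leq_ltn_trans (leq_pred i) (ltn_ord i).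
pose k := Ordinal k_lt_n.
have k_i : (k < i)%N by rewrite /= ltn_predL.
have elem_fix (j : 'I_n) : (k < j)%N -> peq (elementary k i j) (X j).
  by move=> k_j w; rewrite /elementary ifN // neq_ltn k_j orbT.
move=> w; have := phi_comm _ (inU_elementary k_i) k w.
rewrite /Defs.comp (subst_inU phiU elem_fix) {1}/elementary eqxx subst_padd.
rewrite coef_padd !subst_pX coef_padd coef_psub /elementary eqxx coef_padd => E.
by apply: (addrI (coef (phi k) w)); rewrite E; ring.
Qed.

Lemma center_subst_invariant (phi psi : 'I_n -> P) (k : 'I_n) :
  in_center phi -> inU psi -> peq (psi k) (X k) ->
  peq (subst psi (psub (phi k) (X k))) (psub (phi k) (X k)).
Proof.
move=> [_ phi_comm] psiU psi_k w.
have := phi_comm _ psiU k w; rewrite /Defs.comp (subst_peq _ psi_k) subst_pX.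
rewrite -(subst_peq _ (peq_padd_psub (phi k) (X k))) subst_padd coef_padd.
rewrite subst_pX psi_k coef_psub => E.
by rewrite E; ring.
Qed.

Lemma subst_invariant_inU (f : P) :
  in_sub 0 f ->
  (forall g : 'I_n -> P, (forall i : 'I_n, (0 < i)%N -> in_sub i (g i)) ->
     peq (subst (fun i => if (i : nat) == 0%N then X i else padd (X i) (g i)) f) f) ->
  forall psi, inU psi -> peq (subst psi f) f.
Proof.
move=> f_sub f_inv psi psiU w.
rewrite -(f_inv (fun j => psub (psi j) (X j))) => [|j _]; last exact: psiU.
apply: (eq_subst_in_sub f_sub) => j j_gt0 v.
by rewrite ifN -?lt0n // peq_padd_psub.
Qed.

Lemma in_center_translate (phi : 'I_n -> P) (f : P) :
  in_sub 0 f -> (forall psi, inU psi -> peq (subst psi f) f) ->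
  (forall i : 'I_n, peq (phi i) (if (i : nat) == 0%N then padd (X i) f else X i)) ->
  in_center phi.
Proof.
move=> f_sub f_inv phi_def.
have phi_fix (j : 'I_n) : (0 < j)%N -> peq (phi j) (X j).
  by move=> j_gt0 w; rewrite phi_def ifN // -lt0n.
have phi_0 (j : 'I_n) : (j : nat) = 0%N -> peq (phi j) (padd (X j) f).
  by move=> j_0 w; rewrite phi_def j_0.
have phiU : inU phi.
  move=> i w; rewrite coef_psub; case: (eqVneq (i : nat) 0%N) => [i_0|i_ne0].
    by rewrite phi_0 // coef_padd addrAC subrr add0r i_0; apply: f_sub.
  by rewrite phi_fix ?lt0n // subrr eqxx.
split=> // psi psiU i w; rewrite /Defs.comp.
have phi_fix_i (j : 'I_n) : (i < j)%N -> peq (phi j) (X j).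
  by move=> i_j; apply: phi_fix; apply: leq_ltn_trans i_j.
rewrite (subst_inU psiU phi_fix_i) coef_padd coef_psub.
case: (eqVneq (i : nat) 0%N) => [i_0|i_ne0]; last first.
  by rewrite (subst_peq _ (phi_fix i _)) ?lt0n // subst_pX phi_fix ?lt0n // addrC subrK.
rewrite (subst_peq _ (phi_0 i i_0)) subst_padd coef_padd subst_pX f_inv //.
by rewrite phi_0 // coef_padd; ring.
Qed.

End Unitriangular.

Theorem theorem3 (K : fieldType) (hK : [pchar K] =i pred0) (n : nat)
  (hn : (3 <= n)%N) (phi : 'I_n -> ncpoly K n) :
  in_center phi <->
  exists f : ncpoly K n,
    in_sub 0 f /\
    (forall g : 'I_n -> ncpoly K n,
       (forall i : 'I_n, (0 < i)%N -> in_sub i (g i)) ->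
       peq (subst (fun i : 'I_n => if (i : nat) == 0%N then @pX K n i
                                   else padd (@pX K n i) (g i)) f) f) /\
    (forall i : 'I_n,
       peq (phi i) (if (i : nat) == 0%N then padd (@pX K n i) f else @pX K n i)).
Proof.
(* The argument never divides by an integer. *)
split; last first.
  move=> [f [f_sub [f_inv phi_def]]].
  exact: in_center_translate f_sub (subst_invariant_inU f_sub f_inv) phi_def.
move=> phi_center; have [phiU _] := phi_center.
have n_gt0 : (0 < n)%N by apply: leq_trans hn.
pose i0 := Ordinal n_gt0.
exists (psub (phi i0) (@pX K n i0)); split; first exact: phiU i0.
split=> [g g_sub|i].
  by apply: center_subst_invariant (inU_translate_tail g_sub) _.
case: eqP => [i_0|/eqP i_ne0]; last by apply: (center_fixes_tail phi_center); rewrite lt0n.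
have -> : i = i0 by exact: val_inj.
by move=> w; rewrite peq_padd_psub.
Qed.
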